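(* Let $(\mathbf{x}_i,y_i)_{i=1}^n\subset\mathbb{R}^d\times\{\pm1\}$, $\mathbf{z}_i:=y_i\mathbf{x}_i$, $\bar{\mathbf{z}}:=\frac1n\sum_i\mathbf{z}_i$, and suppose there are $r>0$ and $0<q<1$ with $\frac1n|\{i:\mathbf{z}_i^\top\bar{\mathbf{z}}<-r\}|\ge q$. Let $L(\mathbf{w})=\frac1n\sum_i\ln(1+\exp(-\mathbf{z}_i^\top\mathbf{w}))$ and let $\mathbf{w}_1=\mathbf{w}_0-\eta\nabla L(\mathbf{w}_0)$ with $\mathbf{w}_0=0$, $\eta>0$. If $L(\mathbf{w}_1)\le L(\mathbf{w}_0)$, then $\eta\le\frac{2\ln2}{rq}$. *)

From HB Require Import structures.
From mathcomp Require Import all_boot all_order all_algebra.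
From mathcomp Require Import all_classical all_reals all_analysis.
Set Implicit Arguments. Unset Strict Implicit. Unset Printing Implicit Defensive.
Import Order.TTheory GRing.Theory Num.Theory.
Import numFieldNormedType.Exports.
Local Open Scope ring_scope.

Definition dotv {R : realType} {d : nat} (u v : 'rV[R]_d) : R :=
  \sum_(k < d) u 0 k * v 0 k.

Definition grad {R : realType} {d : nat} (f : 'rV[R]_d -> R) (w : 'rV[R]_d)
  : 'rV[R]_d :=
  \row_(j < d) ('D_(delta_mx 0 j) f w).

Definition logloss {R : realType} {d n : nat} (z : 'I_n -> 'rV[R]_d)
  (w : 'rV[R]_d) : R :=
  n%:R^-1 * \sum_(i < n) ln (1 + expR (- dotv (z i) w)).

(* At w0 = 0 every sample has margin 0 and logistic derivative 1/2, so
   grad L(0) = -zbar/2 and the first step is w1 = (eta/2) zbar, while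
   L(0) = ln 2.  Since ln (1 + e^a) >= max(a, 0), each sample with
   z_i . zbar < -r contributes at least eta r / 2 to n L(w1), and there are
   at least q n of them; hence ln 2 >= L(w1) >= q eta r / 2. *)
From HB Require Import structures.
From mathcomp Require Import all_boot all_order all_algebra.
From mathcomp Require Import all_classical all_reals all_analysis.
From mathcomp Require Import ring lra.
Set Implicit Arguments. Unset Strict Implicit. Unset Printing Implicit Defensive.
Import Order.TTheory GRing.Theory Num.Theory.
Import numFieldNormedType.Exports.
Local Open Scope ring_scope.

Section LogisticLoss.
Context {R : realType}.
Implicit Types (d n : nat) (a c : R).

Lemma dotvZr d (u v : 'rV[R]_d) c : dotv u (c *: v) = c * dotv u v.
Proof. by rewrite /dotv mulr_sumr; apply: eq_bigr => k _; rewrite mxE mulrCA. Qed.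

Lemma dotv0r d (u : 'rV[R]_d) : dotv u 0 = 0.
Proof. by rewrite /dotv big1 // => k _; rewrite mxE mulr0. Qed.

Lemma dotv_delta d (u : 'rV[R]_d) j : dotv u (delta_mx 0 j) = u 0 j.
Proof.
rewrite /dotv (bigD1 j) //= mxE !eqxx mulr1 big1 ?addr0 // => k hk.
by rewrite mxE (negbTE hk) andbF mulr0.
Qed.

Lemma ln1pexp_ge a : a <= ln (1 + expR a).
Proof. by rewrite -{1}(expRK a) ler_ln ?posrE ?addr_gt0 ?expR_gt0 // lerDr. Qed.

Lemma ln1pexp_ge0 a : 0 <= ln (1 + expR a).
Proof. by apply: ln_ge0; rewrite lerDl ltW // expR_gt0. Qed.

Lemma derive_along_line d (f : 'rV[R]_d -> R) (w v : 'rV[R]_d) :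
  'D_v f w = 'D_1 (fun t : R => f (w + t *: v)) 0.
Proof.
rewrite /derive; f_equal; f_equal; apply/funext => h /=.
by rewrite scale0r !addr0 (addrC w) -[h%:A]/(h * 1) mulr1.
Qed.

Lemma is_derive_softplus_margin0 c :
  is_derive (0 : R) 1 (fun t : R => ln (1 + expR (- (t * c)))) (- c / 2).
Proof.
have dmargin : is_derive (0 : R) 1 (fun t : R => - (t * c)) (- c).
  apply: is_derive_eq (is_deriveN (is_deriveM (is_derive_id (0 : R) (1 : R))
    (is_derive_cst c (0 : R) (1 : R)))) _.
  by rewrite /= scaler0 add0r; congr (- _); apply: mulr1.
have dinner : is_derive (0 : R) 1 (fun t : R => 1 + expR (- (t * c))) (- c).
  apply: is_derive_eq (is_deriveD (is_derive_cst (1 : R) (0 : R) (1 : R))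
    (is_derive1_comp (is_derive_expR _) dmargin)) _.
  by rewrite /= add0r mul0r oppr0 expR0 mul1r.
have inner_gt0 : 0 < 1 + expR (- ((0 : R) * c)) by rewrite mul0r oppr0 expR0.
apply: is_derive_eq (@is_derive1_comp R (@ln R) (fun t : R => 1 + expR (- (t * c)))
  0 _ _ (is_derive1_ln inner_gt0) dinner) _.
by rewrite mul0r oppr0 expR0 mulrC.
Qed.

Lemma grad_logloss0 d n (z : 'I_n -> 'rV[R]_d) :
  grad (logloss z) 0 = - 2^-1 *: (n%:R^-1 *: \sum_(i < n) z i).
Proof.
apply/rowP => j; rewrite !mxE derive_along_line.
have dL : is_derive (0 : R) 1 (fun t : R => logloss z (0 + t *: delta_mx 0 j))
    (n%:R^-1 * \sum_(i < n) (- z i 0 j / 2)).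
  have := is_deriveZ n%:R^-1
    (is_derive_sum (fun i => is_derive_softplus_margin0 (z i 0 j))).
  congr is_derive; apply/funext => t; rewrite /logloss /= fct_sumE add0r.
  by congr (_ * _); apply: eq_bigr => i _; rewrite dotvZr dotv_delta.
rewrite (@derive_val _ _ _ _ _ _ _ dL) summxE.
under eq_bigr do rewrite mulNr.
rewrite sumrN -mulr_suml; ring.
Qed.

Lemma logloss0 d n (z : 'I_n -> 'rV[R]_d) : (0 < n)%N -> logloss z 0 = ln 2.
Proof.
move=> n_gt0; rewrite /logloss; under eq_bigr do rewrite dotv0r oppr0 expR0.
by rewrite sumr_const card_ord -[ln _ *+ _]mulr_natr mulrC mulfK // pnatr_eq0 -lt0n.
Qed.

Lemma logloss_ge_card d n (z : 'I_n -> 'rV[R]_d) (w : 'rV[R]_d) (S : {set 'I_n}) m :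
  (forall i, i \in S -> m <= - dotv (z i) w) ->
  m * (n%:R^-1 * #|S|%:R) <= logloss z w.
Proof.
move=> marginS; rewrite /logloss mulrCA ler_wpM2l ?invr_ge0 ?ler0n //.
rewrite mulr_natr -sumr_const big_mkcond /=; apply: ler_sum => i _.
case: ifP => iS; last exact: ln1pexp_ge0.
exact: le_trans (marginS i iS) (ln1pexp_ge _).
Qed.

End LogisticLoss.

Theorem mainTheorem15 (R : realType) (d n : nat)
  (x : 'I_n -> 'rV[R]_d) (y : 'I_n -> R)
  (hy : forall i, y i = 1 \/ y i = -1)
  (r q eta : R) (hr : 0 < r) (hq0 : 0 < q) (hq1 : q < 1) (heta : 0 < eta) :
  let z := fun i => y i *: x i in
  let zbar := n%:R^-1 *: \sum_(i < n) z i in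
  q <= n%:R^-1 * (#|[set i : 'I_n | dotv (z i) zbar < - r]|)%:R ->
  let w0 : 'rV[R]_d := 0 in
  let w1 := w0 - eta *: grad (logloss z) w0 in
  logloss z w1 <= logloss z w0 ->
  eta <= 2 * ln 2 / (r * q).
Proof.
move=> z zbar hcard w0 w1 descent.
set S := [set i | _] in hcard.
have w1E : w1 = (eta / 2) *: zbar.
  by rewrite /w1 /w0 grad_logloss0 -/zbar sub0r scalerA mulrN scaleNr opprK mulrC.
have n_gt0 : (0 < n)%N.
  by rewrite lt0n; apply: contraTneq hcard => n0; rewrite [n%:R](congr1 _ n0) invr0 mul0r -ltNge.
have marginS i : i \in S -> eta * r / 2 <= - dotv (z i) w1.
  rewrite inE w1E dotvZr => /ltW zi_lt.
  have : eta / 2 * dotv (z i) zbar <= eta / 2 * - r by rewrite ler_pM2l ?divr_gt0.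
  lra.
have := le_trans (logloss_ge_card marginS) descent.
rewrite logloss0 // => bound.
rewrite ler_pdivlMr ?mulr_gt0 //.
have -> : eta * (r * q) = 2 * (eta * r / 2 * q) by field.
rewrite ler_pM2l //; apply: le_trans bound.
by rewrite ler_pM2l // divr_gt0 ?mulr_gt0.
Qed.
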